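(* Let $\tau$ be a signature, $\kappa$ an infinite cardinal, $s$ and $S^2_\kappa(\tau)$ as in the context. Let $\{\mathcal A_i:i\in I\}$ be a set of $\tau$-structures, for each $i\in I$ let $\overrightarrow{R^i_\kappa}=(R^i_k)_{k<\kappa}$ be relations of kind $s$ on $\mathcal A_i$, and put $U=\{\mathbf{tp}(\mathcal A_i,\overrightarrow{R^i_\kappa}):i\in I\}$. Let $J\subseteq I$, $\mathcal F$ an ultrafilter on $J$, $\mathcal A=\prod_{j\in J}\mathcal A_j/\mathcal F$, and $\overrightarrow{R_\kappa}$ the relations of kind $s$ on $\mathcal A$ given by $R_k=\prod_{j\in J}R^j_k/\mathcal F$ ($k<\kappa$). Then $\mathbf{tp}(\mathcal A,\overrightarrow{R_\kappa})\in\overline U$, where $\overline U$ is the topological closure of $U$ in $2^\lambda$. Furthermore, if $p\in\overline U$, then there exist a set $L\subseteq I$, an ultrafilter $\mathcal G$ on $L$, and relations $\overrightarrow{S^l_\kappa}$ of kind $s$ on $\mathcal A_l$ ($l\in L$) such that $\mathbf{tp}(\mathcal B,\overrightarrow{S_\kappa})=p$, where $\mathcal B=\prod_{l\in L}\mathcal A_l/\mathcal G$ and $S_k=\prod_{l\in L}S^l_k/\mathcal G$ for $k<\kappa$.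
   Context: Fix a sequence $s=(s_k)_{k<\kappa}$ of natural numbers in which each value occurs $\kappa$ many times. Let $X_k$ ($k<\kappa$) be new relation symbols with arity $s_k$, and $F$ the set of first-order sentences of signature $\tau\cup\{X_k:k<\kappa\}$; $|F|=\lambda$ with a fixed enumeration $F=\{\phi_\xi:\xi<\lambda\}$, so subsets of $F$ are identified with elements of $2^\lambda$ (product topology). A $\kappa$-2-type is a set $p\subseteq F$ such that every finite subset of $p$ has a model and for every $\phi\in F$ either $\phi\in p$ or $\neg\phi\in p$; $S^2_\kappa(\tau)$ is the set of $\kappa$-2-types with the subspace topology from $2^\lambda$. A tuple $(R_k)_{k<\kappa}$ of relations on a $\tau$-structure $\mathcal A$ is of kind $s$ if $R_k\subseteq A^{s_k}$ for all $k$, and $\mathbf{tp}(\mathcal A,(R_k)_{k<\kappa})=\{\phi\in F:\langle\mathcal A,R_k\rangle_{k<\kappa}\models\phi\}$ with $X_k$ interpreted by $R_k$. *)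

From Stdlib Require Import ClassicalEpsilon FunctionalExtensionality PropExtensionality.
From Stdlib Require List.
From mathcomp Require Import all_boot.

Set Implicit Arguments.
Unset Strict Implicit.
Unset Printing Implicit Defensive.

Record signature := Signature {
  fsym : Type;  (* function symbols (constants = arity 0) *)
  rsym : Type;
  farity : fsym -> nat;
  rarity : rsym -> nat }.

Record structure (L : signature) := Structure {
  dom : Type;
  dom_inh : inhabited dom;
  fn : forall f : fsym L, ('I_(farity f) -> dom) -> dom;
  rl : forall r : rsym L, ('I_(rarity r) -> dom) -> Prop }.

Inductive term (L : signature) : Type :=
  | var : nat -> term L
  | app : forall f : fsym L, ('I_(farity f) -> term L) -> term L.

Inductive formula (L : signature) : Type :=
  | fEq : term L -> term L -> formula L
  | fRel : forall r : rsym L, ('I_(rarity r) -> term L) -> formula L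
  | fNeg : formula L -> formula L
  | fAnd : formula L -> formula L -> formula L
  | fEx : nat -> formula L -> formula L.

Fixpoint occurs (L : signature) (x : nat) (t : term L) : Prop :=
  match t with
  | var y => x = y
  | app f ts => exists i, occurs x (ts i)
  end.

Fixpoint free_in (L : signature) (x : nat) (phi : formula L) : Prop :=
  match phi with
  | fEq t u => occurs x t \/ occurs x u
  | fRel r ts => exists i, occurs x (ts i)
  | fNeg p => free_in x p
  | fAnd p q => free_in x p \/ free_in x q
  | fEx y p => x <> y /\ free_in x p
  end.

Definition sentence (L : signature) (phi : formula L) : Prop :=
  forall x, ~ free_in x phi.

Definition upd (D : Type) (e : nat -> D) (x : nat) (a : D) : nat -> D :=
  fun y => if y == x then a else e y.

Fixpoint eval (L : signature) (M : structure L) (e : nat -> dom M) (t : term L)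
  : dom M :=
  match t with
  | var y => e y
  | app f ts => @fn L M f (fun i => @eval L M e (ts i))
  end.

Fixpoint sat (L : signature) (M : structure L) (e : nat -> dom M) (phi : formula L)
  : Prop :=
  match phi with
  | fEq t u => @eval L M e t = @eval L M e u
  | fRel r ts => @rl L M r (fun i => @eval L M e (ts i))
  | fNeg p => ~ @sat L M e p
  | fAnd p q => @sat L M e p /\ @sat L M e q
  | fEx y p => exists a : dom M, @sat L M (upd e y a) p
  end.

Definition expsig (L : signature) (K : Type) (s : K -> nat) : signature :=
  {| fsym := fsym L; rsym := (rsym L + K)%type; farity := @farity L;
     rarity := fun r => match r with inl r0 => rarity r0 | inr k => s k end |}.

Definition rels_of_kind (K : Type) (s : K -> nat) (D : Type) : Type :=
  forall k : K, ('I_(s k) -> D) -> Prop.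

Definition expand (L : signature) (K : Type) (s : K -> nat) (M : structure L)
  (R : rels_of_kind s (dom M)) : structure (expsig L s) :=
  @Structure (expsig L s) (dom M) (dom_inh M) (@fn L M)
    (fun r : (rsym L + K)%type =>
       match r as rr return ('I_(@rarity (expsig L s) rr) -> dom M) -> Prop with
       | inl r0 => @rl L M r0 | inr k => R k end).

(* A point of 2^F: a set of sentences of the expanded signature. *)
Definition tp (L : signature) (K : Type) (s : K -> nat) (M : structure L)
  (R : rels_of_kind s (dom M)) : formula (expsig L s) -> Prop :=
  fun phi => sentence phi /\ forall e : nat -> dom M, @sat (expsig L s) (expand R) e phi.

(* Closure in the product topology of 2^F: every basic open neighbourhood
   (determined by finitely many coordinates) of p meets U. *)
Definition in_closure (L : signature) (U : (formula L -> Prop) -> Prop)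
  (p : formula L -> Prop) : Prop :=
  forall D : list (formula L), (forall phi, List.In phi D -> sentence phi) ->
    exists u, U u /\ forall phi, List.In phi D -> (p phi <-> u phi).

Definition ultrafilter (T : Type) (F : (T -> Prop) -> Prop) : Prop :=
  [/\ F (fun _ => True), ~ F (fun _ => False),
      (forall X Y, F X -> F Y -> F (fun t => X t /\ Y t)),
      (forall X Y : T -> Prop, F X -> (forall t, X t -> Y t) -> F Y) &
      (forall X, F X \/ F (fun t => ~ X t))].

Section Ultraproduct.
Variables (L : signature) (T : Type) (A : T -> structure L) (F : (T -> Prop) -> Prop).

Definition pre := forall t, dom (A t).
Definition ueqv (a b : pre) : Prop := F (fun t => a t = b t).
Definition ucarrier := { C : pre -> Prop | exists a, forall b, C b <-> ueqv a b }.
Definition ucls (a : pre) : ucarrier :=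
  exist _ (ueqv a) (ex_intro _ a (fun b => iff_refl (ueqv a b))).
Definition urep (C : ucarrier) : pre :=
  proj1_sig (constructive_indefinite_description _ (proj2_sig C)).

Definition pre_pt : pre := fun t =>
  proj1_sig (constructive_indefinite_description (fun _ : dom (A t) => True)
    (match dom_inh (A t) with inhabits x => ex_intro _ x I end)).

Definition ultraprod : structure L :=
  {| dom := ucarrier; dom_inh := inhabits (ucls pre_pt);
     fn := fun f args => ucls (fun t => @fn L (A t) f (fun i => urep (args i) t));
     rl := fun r args => F (fun t => @rl L (A t) r (fun i => urep (args i) t)) |}.

Definition ultrarels (K : Type) (s : K -> nat) (R : forall t, rels_of_kind s (dom (A t)))
  : rels_of_kind s (dom ultraprod) :=
  fun k args => F (fun t => R t k (fun i => urep (args i) t)).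

End Ultraproduct.

(* Everything rests on Łoś's theorem for the expanded ultraproduct
   ([tp_ultrarels]): a sentence belongs to the type of the ultraproduct iff
   the set of indices whose type contains it is in the ultrafilter.  Hence
   for any finite set of sentences almost every factor agrees with the
   ultraproduct, so its type is in the closure of U.  Conversely, if p is in
   the closure, the sets of indices whose type contains a given finite part of
   p form a proper filter base. *)

From mathcomp Require Import all_boot.
From mathcomp Require Import boolp classical_sets filter.
From Stdlib Require Import ClassicalEpsilon.
From Stdlib Require List.

Set Implicit Arguments.
Unset Strict Implicit.
Unset Printing Implicit Defensive.

Local Open Scope classical_set_scope.

Lemma filter_all_In {T : Type} (F : set_system T) {FF : Filter F}
    (A : Type) (D : list A) (X : A -> set T) :
  (forall a, List.In a D -> F (X a)) ->
  F (fun t => forall a, List.In a D -> X a t).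
Proof.
elim: D => [|a D IH] FX; first exact: filterE.
have FXD := IH (fun b Db => FX b (or_intror Db)).
by apply: filterS (filterI (FX a (or_introl erefl)) FXD) => t [Xa XD] b [<-|/XD].
Qed.

Lemma filter_congr {T : Type} (F : set_system T) {FF : Filter F} (Z X Y : set T) :
  F Z -> (forall t, Z t -> (X t <-> Y t)) -> (F X <-> F Y).
Proof.
by move=> FZ XY; split=> FXY; apply: filterS (filterI FZ FXY) => t [/XY XYt /XYt].
Qed.

Lemma filter_andP {T : Type} (F : set_system T) {FF : Filter F} (X Y : set T) :
  F X /\ F Y <-> F (X `&` Y).
Proof.
split=> [[FX FY]|FXY]; first exact: filterI.
by split; apply: filterS FXY => t [].
Qed.

Section Ultrafilter.
Variables (T : Type) (F : set_system T).
Hypothesis F_ultra : ultrafilter F.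

Lemma ultrafilter_proper : ProperFilter F.
Proof.
case: F_ultra => FT F0 FI FS _; apply: Build_ProperFilter => //.
by split=> // X Y XY FX; exact: FS FX XY.
Qed.

Let F_proper := ultrafilter_proper.
Existing Instance F_proper.

Lemma ultraN (X : set T) : ~ F X <-> F (~` X).
Proof.
split; first by case: F_ultra => _ _ _ _ /(_ X) [].
move=> FnX FX; apply: (filter_not_empty F).
by apply: filterS (filterI FX FnX) => t [Xt /(_ Xt)].
Qed.

Lemma ultra_iff_const (P : Prop) (X : set T) :
  (P <-> F X) -> F (fun t => P <-> X t).
Proof.
move=> PX; have [p|np] := pselect P.
  by apply: filterS (PX.1 p) => t Xt; split.
have nFX : ~ F X := fun FX => np (PX.2 FX).
by apply: filterS ((ultraN X).1 nFX) => t nXt; split=> // /nXt.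
Qed.

End Ultrafilter.

Lemma UltraFilter_ultrafilter (T : Type) (G : set_system T) :
  UltraFilter G -> ultrafilter G.
Proof.
move=> G_ultra; split.
- exact: filterT.
- exact: filter_not_empty.
- exact: filterI.
- by move=> X Y GX XY; exact: filterS XY GX.
- by move=> X; exact: in_ultra_setVsetC.
Qed.

Lemma eq_eval (L : signature) (M : structure L) (e e' : nat -> dom M) (tm : term L) :
  (forall x, occurs x tm -> e x = e' x) -> eval e tm = eval e' tm.
Proof.
elim: tm => [y|f ts IH] /= ee'; first exact: ee'.
by congr fn; apply/funext => i; apply: IH => x x_ts; apply: ee'; exists i.
Qed.

Lemma eq_sat (L : signature) (M : structure L) (phi : formula L) (e e' : nat -> dom M) :
  (forall x, free_in x phi -> e x = e' x) -> (sat e phi <-> sat e' phi).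
Proof.
elim: phi e e' => [t1 t2|r ts|p IH|p IHp q IHq|y p IH] e e' /= ee'.
- by rewrite (@eq_eval _ _ e e' t1) ?(@eq_eval _ _ e e' t2) // => x x_t;
    apply: ee'; [right|left].
- suff -> : (fun i => eval e (ts i)) = (fun i => eval e' (ts i)) by [].
  by apply/funext => i; apply: eq_eval => x x_ts; apply: ee'; exists i.
- by rewrite (IH e e').
- by rewrite (IHp e e') ?(IHq e e') // => x x_phi; apply: ee'; [right|left].
- suff upd_ee' a : sat (upd e y a) p <-> sat (upd e' y a) p.
    by split=> -[a /upd_ee' ?]; exists a.
  by apply: IH => x x_p; rewrite /upd; case: eqP => // x_y; apply: ee'.
Qed.

Lemma sentence_sat (L : signature) (M : structure L) (phi : formula L)
    (e : nat -> dom M) :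
  sentence phi -> (forall e' : nat -> dom M, sat e' phi) <-> sat e phi.
Proof.
move=> phi_sent; split=> [|phi_e e']; first exact.
by apply: (eq_sat _).1 phi_e => x /phi_sent.
Qed.

Lemma tp_sat (L : signature) (K : Type) (s : K -> nat) (M : structure L)
    (R : rels_of_kind s (dom M)) (phi : formula (expsig L s)) (e : nat -> dom M) :
  sentence phi -> (tp R phi <-> sat (M := expand R) e phi).
Proof.
by move=> phi_sent; rewrite -sentence_sat //; split=> [[]|].
Qed.

Lemma tpN (L : signature) (K : Type) (s : K -> nat) (M : structure L)
    (R : rels_of_kind s (dom M)) (phi : formula (expsig L s)) :
  sentence phi -> (tp R (fNeg phi) <-> ~ tp R phi).
Proof.
have [a] := dom_inh M; move=> phi_sent.
by rewrite !(tp_sat R (fun=> a)).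
Qed.

Section Ultraproduct.
Variables (L : signature) (T : Type) (A : T -> structure L) (F : set_system T).
Hypothesis F_ultra : ultrafilter F.

Let F_proper := ultrafilter_proper F_ultra.
Existing Instance F_proper.

Lemma eq_ucls (a b : pre A) : ucls F a = ucls F b <-> ueqv F a b.
Proof.
split=> [ab|Fab].
  have : proj1_sig (ucls F b) b by exact: filterE.
  by rewrite -ab.
apply: eq_exist; apply/funext => c; apply/propext.
by split=> F_c; apply: filterS (filterI Fab F_c) => t [-> ->].
Qed.

Lemma urepK (C : ucarrier A F) : ucls F (urep C) = C.
Proof.
case: C => C C_cls; rewrite /urep /=.
case: constructive_indefinite_description => a a_C /=.
by apply: eq_exist; apply/funext => b; apply/propext; exact: iff_sym.
Qed.

Lemma urep_ucls (w : pre A) : ueqv F (urep (ucls F w)) w.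
Proof. by apply/eq_ucls; rewrite urepK. Qed.

Lemma urep_ucls_tuple n (w : 'I_n -> pre A) :
  F (fun t => forall i, urep (ucls F (w i)) t = w i t).
Proof. exact: filter_forall (fun i => urep_ucls (w i)). Qed.

Definition uproj (e : nat -> ucarrier A F) (t : T) : nat -> dom (A t) :=
  fun n => urep (e n) t.

Lemma uproj_upd e y a t : uproj (upd e y a) t = upd (uproj e t) y (urep a t).
Proof. by apply/funext => n; rewrite /uproj /upd; case: (n == y). Qed.

Lemma eval_ultraprod (e : nat -> dom (ultraprod A F)) (tm : term L) :
  eval e tm = ucls F (fun t => eval (uproj e t) tm).
Proof.
elim: tm => [y|f ts IH] /=; first by rewrite urepK.
apply/eq_ucls.
apply: filterS (urep_ucls_tuple (fun i t => eval (uproj e t) (ts i))) => t urep_ts.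
by congr fn; apply/funext => i; rewrite IH; exact: urep_ts.
Qed.

Lemma urep_eval (e : nat -> dom (ultraprod A F)) n (ts : 'I_n -> term L) :
  F (fun t => forall i, urep (eval e (ts i)) t = eval (uproj e t) (ts i)).
Proof.
apply: filterS (urep_ucls_tuple (fun i t => eval (uproj e t) (ts i))) => t urep_ts i.
by rewrite eval_ultraprod; exact: urep_ts.
Qed.

Theorem sat_ultraprod (phi : formula L) (e : nat -> dom (ultraprod A F)) :
  sat e phi <-> F (fun t => sat (uproj e t) phi).
Proof.
elim: phi e => [t1 t2|r ts|p IH|p IHp q IHq|y p IH] e /=.
- by rewrite !eval_ultraprod eq_ucls.
- apply: (filter_congr (urep_eval e ts)) => t urep_ts.
  by rewrite (funext urep_ts).
- by rewrite IH; exact: ultraN.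
- by rewrite IHp IHq; exact: filter_andP.
- split=> [[a /IH]|Fex].
    by apply: filterS => t; rewrite uproj_upd => p_t; exists (urep a t).
  pose w : pre A := fun t =>
    epsilon (dom_inh (A t)) (fun b => sat (upd (uproj e t) y b) p).
  exists (ucls F w); apply/IH.
  apply: filterS (filterI Fex (urep_ucls w)) => t [ex_t w_t].
  by rewrite uproj_upd w_t; exact: epsilon_spec ex_t.
Qed.

End Ultraproduct.

Lemma in_closureS (L : signature) (U V : set (formula L -> Prop)) p :
  U `<=` V -> in_closure U p -> in_closure V p.
Proof. by move=> UV p_cl D D_sent; have [u [/UV]] := p_cl D D_sent; exists u. Qed.

Section TypeSpace.
Variables (L : signature) (K : Type) (s : K -> nat) (T : Type) (A : T -> structure L).
Variable R : forall t, rels_of_kind s (dom (A t)).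
Arguments R : clear implicits.

Lemma expand_ultrarels (F : set_system T) :
  expand (ultrarels (F := F) R) = ultraprod (fun t => expand (R t)) F.
Proof. by congr Structure; apply: functional_extensionality_dep => -[r|k]. Qed.

Lemma tp_ultrarels (F : set_system T) (phi : formula (expsig L s)) :
  ultrafilter F -> sentence phi ->
  (tp (ultrarels (F := F) R) phi <-> F (fun t => tp (R t) phi)).
Proof.
move=> F_ultra phi_sent; have [a] := dom_inh (expand (ultrarels (F := F) R)).
(* [a] is generalised so that rewriting the structure is well typed. *)
rewrite (tp_sat (ultrarels (F := F) R) (fun=> a) phi_sent); move: a.
rewrite expand_ultrarels => a; rewrite sat_ultraprod //.
suff -> : (fun t => tp (R t) phi) = (fun t => sat (uproj (fun=> a) t) phi) by [].
by apply/funext => t; apply/propext; exact: tp_sat.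
Qed.

Lemma tp_ultrarels_in_closure (F : set_system T) :
  ultrafilter F ->
  in_closure (range (fun t => tp (R t))) (tp (ultrarels (F := F) R)).
Proof.
move=> F_ultra D D_sent; have F_proper := ultrafilter_proper F_ultra.
have agree : F (fun t => forall phi, List.In phi D ->
    (tp (ultrarels (F := F) R) phi <-> tp (R t) phi)).
  apply: filter_all_In => phi /D_sent phi_sent.
  exact (ultra_iff_const F_ultra (tp_ultrarels F_ultra phi_sent)).
by have [t D_t] := filter_ex agree; exists (tp (R t)); split; [exists t|].
Qed.

Lemma in_closure_tpN (p : formula (expsig L s) -> Prop) phi :
  in_closure (range (fun t => tp (R t))) p -> sentence phi -> ~ p phi -> p (fNeg phi).
Proof.
move=> p_cl phi_sent not_p_phi.
have [|_ [[t _ <-] agree]] := p_cl [:: phi; fNeg phi].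
  by move=> psi [<-|[<-|[]]].
apply/(agree _ (or_intror (or_introl erefl))); apply/tpN => //.
by move/(agree _ (or_introl erefl)).
Qed.

Lemma in_closure_tp_ultrarels (p : formula (expsig L s) -> Prop) :
    (forall phi, p phi -> sentence phi) ->
    in_closure (range (fun t => tp (R t))) p ->
  exists G, ultrafilter G /\ tp (ultrarels (F := G) R) = p.
Proof.
move=> p_sent p_cl.
pose realizing D := [set t | forall phi, List.In phi D -> tp (R t) phi].
pose F0 := filter_from [set D | forall phi, List.In phi D -> p phi] realizing.
have F0_proper : ProperFilter F0.
  apply: filter_from_proper.
    apply: filter_from_filter; first by exists nil.
    move=> D1 D2 p_D1 p_D2; exists (D1 ++ D2).
      by move=> phi /List.in_app_iff [/p_D1|/p_D2].
    by move=> t D_t; split=> phi D_phi; apply: D_t; apply/List.in_app_iff; [left|right].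
  move=> D p_D; have [|_ [[t _ <-] agree]] := p_cl D.
    by move=> phi /p_D /p_sent.
  by exists t => phi D_phi; apply/agree => //; exact: p_D.
have [G [G_ultra F0_G]] := ultraFilterLemma F0_proper.
have G_p phi : p phi -> G [set t | tp (R t) phi].
  move=> p_phi; apply: F0_G; exists [:: phi]; first by move=> psi [<-|[]].
  by move=> t /(_ phi (or_introl erefl)).
exists G; split; first exact: UltraFilter_ultrafilter.
apply/funext => phi; apply/propext.
have [phi_sent|not_sent] := pselect (sentence phi); last by split=> [[]|/p_sent].
rewrite (tp_ultrarels (UltraFilter_ultrafilter G_ultra) phi_sent).
split=> [G_phi|/G_p //]; apply: contrapT => not_p_phi.
have G_not_phi := G_p _ (in_closure_tpN p_cl phi_sent not_p_phi).
apply: (filter_not_empty G); apply: filterS (filterI G_phi G_not_phi).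
by move=> t [tp_phi /tpN]; apply.
Qed.

End TypeSpace.

Theorem lemma2p27 (tau : signature) (K : Type) (s : K -> nat)
  (K_infinite : exists f : nat -> K, injective f)
  (s_kappa : forall n : nat, exists g : K -> {k : K | s k = n}, bijective g)
  (I : Type) (A : I -> structure tau) (R : forall i : I, rels_of_kind s (dom (A i))) :
  let U := fun p => exists i : I, p = tp (R i) in
  (forall (J : I -> Prop) (F : ({j : I | J j} -> Prop) -> Prop),
     ultrafilter F ->
     in_closure U (tp (@ultrarels tau {j : I | J j} (fun j => A (proj1_sig j)) F
                                 K s (fun j => R (proj1_sig j)))))
  /\
  (forall p : formula (expsig tau s) -> Prop,
     (forall phi, p phi -> sentence phi) ->
     in_closure U p ->
     exists (L : I -> Prop) (G : ({l : I | L l} -> Prop) -> Prop)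
            (S : forall l : {l : I | L l}, rels_of_kind s (dom (A (proj1_sig l)))),
       ultrafilter G /\
       tp (@ultrarels tau {l : I | L l} (fun l => A (proj1_sig l)) G K s S) = p).
Proof.
move=> U; split.
- move=> J F F_ultra; apply: in_closureS (tp_ultrarels_in_closure _ F_ultra).
  by move=> _ [j _ <-]; exists (proj1_sig j).
- move=> p p_sent p_cl.
  have U_sub : U `<=` range (fun l : {l : I | True} => tp (R (proj1_sig l))).
    by move=> _ [i ->]; exists (exist _ i Logic.I).
  have [G [G_ultra <-]] := in_closure_tp_ultrarels p_sent (in_closureS U_sub p_cl).
  by exists (fun _ => True), G, (fun l => R (proj1_sig l)).
Qed.
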